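(* (Fundamental theorem for partial comodules.) Let $k$ be a field, $H$ a $k$-coalgebra, $X=(X,X\bullet H,\pi_X,\rho_X)$ a quasi partial $H$-comodule and $x\in X$. Then there exists a finite-dimensional quasi partial subcomodule $Y\subseteq X$ with $x\in Y$. If moreover $X$ is lax (resp. geometric), then $Y$ is lax (resp. geometric) as well.
   Context: Work in the category of $k$-vector spaces. A partial comodule datum is $(X,X\bullet H,\pi_X,\rho_X)$ with $\pi_X:X\otimes H\to X\bullet H$ surjective linear and $\rho_X:X\to X\bullet H$ linear. Associated pushouts (in vector spaces): $X\bullet k$ (of $\pi_X$ and $X\otimes\epsilon:X\otimes H\to X\otimes k$, legs $X\bullet\epsilon$, $\pi_{X,\epsilon}$); $(X\bullet H)\bullet H$ (of $\pi_X$ and $\rho_X\otimes H:X\otimes H\to(X\bullet H)\otimes H$, legs $\rho_X\bullet H$, $\pi_{X\bullet H}$); $X\bullet(H\otimes H)$ (of $\pi_X$ and $X\otimes\Delta$, legs $X\bullet\Delta$, $\pi_{X,\Delta}$); $X\bullet(H\bullet H)$ (of $\pi_{X,\Delta}$ and $\pi_X\otimes H$, legs $\pi'_X:X\bullet(H\otimes H)\to X\bullet(H\bullet H)$, $\pi'_{X,\Delta}:(X\bullet H)\otimes H\to X\bullet(H\bullet H)$); $\Theta$ (of $\pi_{X\bullet H}$ and $\pi'_{X,\Delta}$, legs $\theta_1,\theta_2$). Quasi partial comodule: $\pi_{X,\epsilon}$ is an isomorphism and $(X\bullet\epsilon)\rho_X=\pi_{X,\epsilon}r_X$ with $r_X:X\cong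 X\otimes k$; and $\theta_1(\rho_X\bullet H)\rho_X=\theta_2\pi'_X(X\bullet\Delta)\rho_X$. Lax: there is a linear map $\theta_X:X\bullet(H\bullet H)\to(X\bullet H)\bullet H$ with $\theta_X\pi'_{X,\Delta}=\pi_{X\bullet H}$; geometric: $\theta_X$ is bijective. A morphism of partial comodule data $Y\to X$ is a pair $(f,f\bullet H)$ with $(f\bullet H)\rho_Y=\rho_Xf$, $(f\bullet H)\pi_Y=\pi_X(f\otimes H)$. A (quasi) partial subcomodule of $X$ is a (quasi) partial comodule $Y$ with a morphism $(f,f\bullet H):Y\to X$ such that $f$ and $f\bullet H$ are injective. *)

From HB Require Import structures.
From mathcomp Require Import all_boot all_order all_algebra.

Set Implicit Arguments.
Unset Strict Implicit.
Unset Printing Implicit Defensive.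

Import GRing.Theory.
Local Open Scope ring_scope.

Section PartialComodules.

Variable k : fieldType.

Definition lin (U V : lmodType k) (f : U -> V) : Prop :=
  forall (a : k) (u v : U), f (a *: u + v) = a *: f u + f v.

Definition bilin (U V W : lmodType k) (b : U -> V -> W) : Prop :=
  (forall v, lin (fun u => b u v)) /\ (forall u, lin (b u)).

Record tensor (U V : lmodType k) := Tensor {
  tcar : lmodType k;
  tmul : U -> V -> tcar;
  tlift : forall W : lmodType k, (U -> V -> W) -> tcar -> W;
  tmul_bilin : bilin tmul;
  tlift_lin : forall (W : lmodType k) (b : U -> V -> W), bilin b -> lin (tlift b);
  tlift_tmul : forall (W : lmodType k) (b : U -> V -> W), bilin b ->
    forall u v, tlift b (tmul u v) = b u v;
  tlift_uniq : forall (W : lmodType k) (b : U -> V -> W) (g : tcar -> W),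
    lin g -> (forall u v, g (tmul u v) = b u v) -> forall t, g t = tlift b t }.

Arguments tlift {U V} t0 {W}.

Record pushout (A B C : lmodType k) (f : A -> B) (g : A -> C) := Pushout {
  pcar : lmodType k;
  pl : B -> pcar;
  pr : C -> pcar;
  pl_lin : lin pl;
  pr_lin : lin pr;
  p_comm : forall a, pl (f a) = pr (g a);
  p_univ : forall (W : lmodType k) (u : B -> W) (v : C -> W),
    lin u -> lin v -> (forall a, u (f a) = v (g a)) ->
    exists! w : pcar -> W,
      lin w /\ (forall b, w (pl b) = u b) /\ (forall c, w (pr c) = v c) }.

Variable tn : forall U V : lmodType k, tensor U V.
Variable po : forall (A B C : lmodType k) (f : A -> B) (g : A -> C), pushout f g.

Definition tens (U V : lmodType k) : lmodType k := tcar (tn U V).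
Definition tm (U V : lmodType k) (u : U) (v : V) : tens U V := tmul (tn U V) u v.

Definition tmap (U U' V V' : lmodType k) (f : U -> U') (g : V -> V') :
  tens U V -> tens U' V' :=
  tlift (tn U V) (fun u v => tm (f u) (g v)).

Definition assoc (U V W : lmodType k) : tens (tens U V) W -> tens U (tens V W) :=
  tlift (tn (tens U V) W)
    (fun t w => tlift (tn U V) (fun u v => tm u (tm v w)) t).

Definition assoc_inv (U V W : lmodType k) : tens U (tens V W) -> tens (tens U V) W :=
  tlift (tn U (tens V W))
    (fun u t => tlift (tn V W) (fun v w => tm (tm u v) w) t).

Record coalgebra (H : lmodType k) := Coalgebra {
  cDelta : H -> tens H H;
  cEps : H -> k^o;
  cDelta_lin : lin cDelta;
  cEps_lin : lin cEps;
  coassoc : forall h,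
    assoc (tmap cDelta (@id H) (cDelta h)) = tmap (@id H) cDelta (cDelta h);
  counit_l : forall h, tmap cEps (@id H) (cDelta h) = tm (1 : k^o) h;
  counit_r : forall h, tmap (@id H) cEps (cDelta h) = tm h (1 : k^o) }.

Record pdatum (H X : lmodType k) := PDatum {
  dXH : lmodType k;
  dpi : tens X H -> dXH;
  drho : X -> dXH;
  dpi_lin : lin dpi;
  dpi_surj : forall z, exists t, dpi t = z;
  drho_lin : lin drho }.

Section Datum.
Variables (H : lmodType k) (C : coalgebra H) (X : lmodType k) (D : pdatum H X).

(* X.k : pushout of pi_X and X(x)eps ; legs X.eps, pi_{X,eps} *)
Definition po_Xk := po (dpi D) (tmap (@id X) (cEps C)).
(* (X.H).H : pushout of pi_X and rho_X(x)H ; legs rho_X.H, pi_{X.H} *)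
Definition po_XHH := po (dpi D) (tmap (drho D) (@id H)).
(* X.(H(x)H) : pushout of pi_X and X(x)Delta ; legs X.Delta, pi_{X,Delta} *)
Definition po_XHoH := po (dpi D) (tmap (@id X) (cDelta C)).
(* X.(H.H) : pushout of pi_{X,Delta} and pi_X(x)H (via X(x)(H(x)H) = (X(x)H)(x)H);
   legs pi'_X, pi'_{X,Delta} *)
Definition po_XHbH :=
  po (pr po_XHoH) (fun t => tmap (dpi D) (@id H) (assoc_inv t)).
(* Theta : pushout of pi_{X.H} and pi'_{X,Delta} ; legs theta_1, theta_2 *)
Definition po_Theta := po (pr po_XHH) (pr po_XHbH).

Definition quasi : Prop :=
  bijective (pr po_Xk) /\
  (forall x : X, pl po_Xk (drho D x) = pr po_Xk (tm x (1 : k^o))) /\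
  (forall x : X, pl po_Theta (pl po_XHH (drho D x))
                 = pr po_Theta (pl po_XHbH (pl po_XHoH (drho D x)))).

Definition lax : Prop :=
  exists theta : pcar po_XHbH -> pcar po_XHH,
    lin theta /\ forall t, theta (pr po_XHbH t) = pr po_XHH t.

Definition geometric : Prop :=
  exists theta : pcar po_XHbH -> pcar po_XHH,
    lin theta /\ (forall t, theta (pr po_XHbH t) = pr po_XHH t) /\ bijective theta.

End Datum.

Definition pmorph (H Y X : lmodType k) (DY : pdatum H Y) (DX : pdatum H X)
  (f : Y -> X) (fH : dXH DY -> dXH DX) : Prop :=
  lin f /\ lin fH /\
  (forall y, fH (drho DY y) = drho DX (f y)) /\
  (forall t, fH (dpi DY t) = dpi DX (tmap f (@id H) t)).

End PartialComodules.

Arguments pmorph {k tn H Y X} DY DX f fH.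

(* The heart of the argument is that, for a quasi partial comodule, the two
   maps X ⊗ H -> (X•H) ⊗ H given by ρ_X ⊗ H and (π_X ⊗ H)(X ⊗ Δ) have a
   common left inverse e ⊗ H, where e : X•H -> X is induced by the counit.
   Using that pushouts of vector spaces are exact, the quasi axioms become:
   (X ⊗ ε) t = x ⊗ 1 whenever π_X t = ρ_X x, and every ρ_X x is π_X s for some
   s on which the two maps agree; laxity and geometricity both become the
   agreement of the two maps on ker π_X.  Given x, write such an s as
   Σ x_i ⊗ h_i with both families linearly independent and take functionals
   g_i dual to the h_i.  Then Y = span(x_i) contains x, and the tensors
   (X ⊗ (g_i ⇀ -)) s lie in the image of Y ⊗ H, lift ρ_X x_i and still make
   the two maps agree, so Y•H can be taken to be the image of Y ⊗ H in X•H. *)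

From Pilot Require Import Defs.
From HB Require Import structures.
From mathcomp Require Import all_boot all_order all_algebra.
From mathcomp Require Import boolp classical_sets.

Set Implicit Arguments.
Unset Strict Implicit.
Unset Printing Implicit Defensive.

Import GRing.Theory.
Local Open Scope ring_scope.

Section LinearAlgebra.
Variable k : fieldType.

Section LinearMaps.
Variables (U V W : lmodType k).

Lemma linD (f : U -> V) : lin f -> forall u v, f (u + v) = f u + f v.
Proof. by move=> f_lin u v; have := f_lin 1 u v; rewrite !scale1r. Qed.

Lemma lin0 (f : U -> V) : lin f -> f 0 = 0.
Proof.
move=> f_lin; have := f_lin 1 0 0; rewrite !scale1r addr0 => E.
by apply: (addrI (f 0)); rewrite -E addr0.
Qed.

Lemma linZ (f : U -> V) : lin f -> forall a u, f (a *: u) = a *: f u.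
Proof. by move=> f_lin a u; have := f_lin a u 0; rewrite !addr0 lin0 // addr0. Qed.

Lemma linN (f : U -> V) : lin f -> forall u, f (- u) = - f u.
Proof. by move=> f_lin u; rewrite -scaleN1r linZ // scaleN1r. Qed.

Lemma linB (f : U -> V) : lin f -> forall u v, f (u - v) = f u - f v.
Proof. by move=> f_lin u v; rewrite linD // linN. Qed.

Lemma lin_sum (f : U -> V) : lin f ->
  forall (I : Type) (r : seq I) (P : pred I) (F : I -> U),
  f (\sum_(i <- r | P i) F i) = \sum_(i <- r | P i) f (F i).
Proof.
move=> f_lin I r P F; elim/big_rec2: _ => [|i y1 y2 _ <-]; first exact: lin0.
exact: linD.
Qed.

Lemma lin_comp (f : U -> V) (g : V -> W) : lin f -> lin g -> lin (g \o f).
Proof. by move=> f_lin g_lin a u v /=; rewrite f_lin g_lin. Qed.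

Lemma lin_id : lin (@id U). Proof. by []. Qed.

Lemma lin_zero : lin (fun _ : U => 0 : V).
Proof. by move=> a u v; rewrite scaler0 addr0. Qed.

End LinearMaps.

Section Subspaces.
Variables (U W : lmodType k).

Definition subspace (S : U -> Prop) :=
  S 0 /\ forall a u v, S u -> S v -> S (a *: u + v).

Definition lin_on (S : U -> Prop) (g : U -> W) :=
  forall a u v, S u -> S v -> g (a *: u + v) = a *: g u + g v.

Lemma subspaceD S : subspace S -> forall u v, S u -> S v -> S (u + v).
Proof. by move=> [_ S_sub] u v Su Sv; have := S_sub 1 u v Su Sv; rewrite scale1r. Qed.

Lemma subspaceZ S : subspace S -> forall a u, S u -> S (a *: u).
Proof. by move=> [S0 S_sub] a u Su; have := S_sub a u 0 Su S0; rewrite addr0. Qed.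

Lemma subspaceB S : subspace S -> forall u v, S u -> S v -> S (u - v).
Proof.
by move=> S_sub u v Su Sv; rewrite -scaleN1r; apply: subspaceD => //; exact: subspaceZ.
Qed.

Lemma lin_on0 S g : subspace S -> lin_on S g -> g 0 = 0.
Proof.
move=> [S0 _] g_lin; have := g_lin 1 0 0 S0 S0; rewrite !scale1r addr0 => E.
by apply: (addrI (g 0)); rewrite -E addr0.
Qed.

Lemma lin_on_extend1 (S : U -> Prop) (g : U -> W) (u0 : U) (w0 : W) :
  subspace S -> lin_on S g -> ~ S u0 ->
  exists (S' : U -> Prop) (g' : U -> W), [/\ subspace S', lin_on S' g',
    forall u, S u -> S' u /\ g' u = g u, S' u0 & g' u0 = w0].
Proof.
move=> S_sub g_lin Su0.
pose S' z := exists p : U * k, S p.1 /\ z = p.1 + p.2 *: u0.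
have coordK s c s' c' : S s -> S s' -> s + c *: u0 = s' + c' *: u0 -> s = s' /\ c = c'.
  move=> Ss Ss' E; suff ec : c = c' by move: E; rewrite ec => /addIr.
  apply: contrapT => /eqP; rewrite -subr_eq0 => nc; apply: Su0.
  have E' : (c - c') *: u0 = s' - s.
    by rewrite scalerBl -(addKr s (c *: u0)) E addrA addrK addrC.
  have -> : u0 = (c - c')^-1 *: (s' - s) by rewrite -E' scalerA mulVf ?scale1r.
  by apply: subspaceZ; last apply: subspaceB.
pose g' z := if pselect (S' z) is left e then
  let p := projT1 (cid e) in g p.1 + p.2 *: w0 else 0.
have g'E s c : S s -> g' (s + c *: u0) = g s + c *: w0.
  move=> Ss; rewrite /g'; case: pselect => [e|[]]; last by exists (s, c).
  case: (cid e) => -[s' c'] /= [Ss' E].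
  by have [-> ->] := coordK _ _ _ _ Ss' Ss (esym E).
have S'E s c : S s -> S' (s + c *: u0) by exists (s, c).
have S0 : S 0 by case: S_sub.
have combE a s c s' c' :
  a *: (s + c *: u0) + (s' + c' *: u0) = (a *: s + s') + (a * c + c') *: u0.
  by rewrite scalerDr scalerDl scalerA addrACA.
exists S', g'; split.
- split; first by exists (0, 0); rewrite /= scale0r addr0.
  move=> a _ _ [[s c] [/= Ss ->]] [[s' c'] [/= Ss' ->]].
  by rewrite combE; apply: S'E; apply: S_sub.2.
- move=> a _ _ [[s c] [/= Ss ->]] [[s' c'] [/= Ss' ->]].
  have Ss'' : S (a *: s + s') by apply: S_sub.2.
  rewrite combE !g'E // g_lin // scalerDr scalerDl scalerA.
  by rewrite addrACA.
- move=> u Su; have := g'E u 0 Su; rewrite !scale0r !addr0 => ->.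
  by split=> //; exists (u, 0); rewrite /= scale0r addr0.
- by exists (0, 1); rewrite /= scale1r add0r.
by have := g'E 0 1 S0; rewrite !scale1r !add0r (lin_on0 S_sub g_lin) add0r.
Qed.

End Subspaces.

Section Extension.
Variables (U W : lmodType k) (V : U -> Prop) (phi : U -> W).
Hypotheses (V_sub : subspace V) (phi_lin : lin_on V phi).

Record partial_ext := PartialExt {
  pe_dom : U -> Prop;
  pe_fun : U -> W;
  pe_subspace : subspace pe_dom;
  pe_lin : lin_on pe_dom pe_fun;
  pe_ext : forall u, V u -> pe_dom u /\ pe_fun u = phi u }.

Definition pe_phi := PartialExt V_sub phi_lin (fun u Vu => conj Vu erefl).

Definition pe_le (p q : partial_ext) : bool :=
  `[< forall u, pe_dom p u -> pe_dom q u /\ pe_fun q u = pe_fun p u >].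

Lemma pe_chain_ub (A : set partial_ext) :
  total_on A pe_le -> exists q, forall p, A p -> pe_le p q.
Proof.
move=> totA; have [[p0 Ap0]|nA] := pselect (exists p, A p); last first.
  by exists pe_phi => p Ap; case: nA; exists p.
pose S u := exists p, A p /\ pe_dom p u.
have two p q : A p -> A q -> exists r, [/\ A r, pe_le p r & pe_le q r].
  move=> Ap Aq; case: (totA p q Ap Aq) => le.
    by exists q; split=> //; apply/asboolP.
  by exists p; split=> //; apply/asboolP.
have share u v : S u -> S v -> exists p, [/\ A p, pe_dom p u & pe_dom p v].
  move=> [p [Ap Spu]] [q [Aq Sqv]].
  have [r [Ar /asboolP pr /asboolP qr]] := two p q Ap Aq.
  by exists r; split=> //; [apply: (pr u Spu).1 | apply: (qr v Sqv).1].
pose g u := if pselect (S u) is left e then pe_fun (projT1 (cid e)) u else 0.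
have gE p u : A p -> pe_dom p u -> g u = pe_fun p u.
  move=> Ap Spu; rewrite /g; case: pselect => [e|[]]; last by exists p.
  case: (cid e) => q /= [Aq Squ]; have [r [Ar /asboolP pr /asboolP qr]] := two p q Ap Aq.
  by rewrite -(qr u Squ).2 (pr u Spu).2.
have S_sub : subspace S.
  split; first by exists p0; split=> //; case: (pe_subspace p0).
  move=> a u v /share/[apply] -[p [Ap Spu Spv]].
  by exists p; split=> //; apply: (pe_subspace p).2.
have g_lin : lin_on S g.
  move=> a u v /share/[apply] -[p [Ap Spu Spv]].
  rewrite !(gE p) //; first exact: pe_lin.
  exact: (pe_subspace p).2.
have g_ext u : V u -> S u /\ g u = phi u.
  move=> Vu; have [Dp0u <-] := pe_ext p0 Vu.
  by split; [exists p0 | apply: gE].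
exists (PartialExt S_sub g_lin g_ext) => p Ap; apply/asboolP => u Spu /=.
by split; [exists p | apply: gE].
Qed.

Lemma lin_on_extend : exists psi : U -> W, lin psi /\ forall u, V u -> psi u = phi u.
Proof.
have [m maxm] : exists m, premaximal pe_le m.
  apply: (ZL_preorder pe_phi) => [p|p q r /asboolP pq /asboolP qr|].
  - by apply/asboolP.
  - by apply/asboolP => u /pq[/qr[Dru <-] <-].
  exact: pe_chain_ub.
suff dom_full u : pe_dom m u.
  by exists (pe_fun m); split=> [a u v|u /(pe_ext m)[]]; first exact: pe_lin.
apply: contrapT => Dmu.
have [S' [g' [S'_sub g'_lin ext S'u _]]] :=
  lin_on_extend1 0 (pe_subspace m) (@pe_lin m) Dmu.
have g'_ext v : V v -> S' v /\ g' v = phi v.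
  by move=> /(pe_ext m)[/ext[S'v ->]].
have /maxm/asboolP le : pe_le m (PartialExt S'_sub g'_lin g'_ext).
  by apply/asboolP => v /ext[].
by case: Dmu; case: (le u S'u).
Qed.

End Extension.

Section Functionals.
Variable U : lmodType k.

Lemma separate_vector (V : U -> Prop) (v : U) : subspace V -> ~ V v ->
  exists psi : U -> k^o, [/\ lin psi, forall z, V z -> psi z = 0 & psi v = 1].
Proof.
move=> V_sub Vv.
have zero_lin : lin_on V (fun _ => 0 : k^o) by move=> a u w _ _; rewrite scaler0 addr0.
have [S [g [S_sub g_lin ext Sv gv]]] := lin_on_extend1 (1 : k^o) V_sub zero_lin Vv.
have [psi [psi_lin psiE]] := lin_on_extend S_sub g_lin.
exists psi; split=> // [z Vz|]; last by rewrite psiE.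
by have [Sz gz] := ext z Vz; rewrite psiE.
Qed.

Lemma subspace_full (S : U -> Prop) : subspace S ->
  (forall psi : U -> k^o,
     lin psi -> (forall z, S z -> psi z = 0) -> forall u, psi u = 0) ->
  forall u, S u.
Proof.
move=> S_sub psi0 u; apply: contrapT => Su.
have [psi [psi_lin psiS psiu]] := separate_vector S_sub Su.
by move/eqP: psiu; rewrite psi0 // eq_sym oner_eq0.
Qed.

End Functionals.

Lemma lin_left_inverse (A B : lmodType k) (g : A -> B) : lin g -> injective g ->
  exists h : B -> A, lin h /\ cancel g h.
Proof.
move=> g_lin g_inj.
pose V b := exists a, b = g a.
pose phi b := if pselect (V b) is left e then projT1 (cid e) else 0.
have phiE a : phi (g a) = a.
  rewrite /phi; case: pselect => [e|[]]; last by exists a.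
  by case: (cid e) => a' /= /g_inj.
have V_sub : subspace V.
  split; first by exists 0; rewrite lin0.
  by move=> c _ _ [a ->] [b ->]; exists (c *: a + b); rewrite g_lin.
have phi_lin : lin_on V phi by move=> c _ _ [a ->] [b ->]; rewrite -g_lin !phiE.
have [h [h_lin hE]] := lin_on_extend V_sub phi_lin.
by exists h; split=> // a; rewrite hE ?phiE //; exists a.
Qed.

Lemma lin_factor (A B C : lmodType k) (p : A -> B) (q : A -> C) :
  lin p -> lin q -> (forall b, exists a, p a = b) ->
  (forall a, p a = 0 -> q a = 0) ->
  exists w : B -> C, lin w /\ forall a, w (p a) = q a.
Proof.
move=> p_lin q_lin p_surj ker_pq.
pose w b := q (projT1 (cid (p_surj b))).
have wE a : w (p a) = q a.
  rewrite /w; case: cid => a' /= E; apply/eqP; rewrite -subr_eq0 -linB //.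
  by rewrite ker_pq // linB // E subrr.
exists w; split=> // c b1 b2.
by have [a1 <-] := p_surj b1; have [a2 <-] := p_surj b2; rewrite -p_lin !wE q_lin.
Qed.

Section Families.
Variable V : lmodType k.

Definition lin_indep n (h : 'I_n -> V) :=
  forall c : 'I_n -> k, \sum_i c i *: h i = 0 -> forall i, c i = 0.

Lemma sum_kronecker n (h : 'I_n -> V) i : \sum_j (i == j)%:R *: h j = h i.
Proof.
rewrite (bigD1 i) //= eqxx scale1r big1 ?addr0 // => j ji.
by rewrite eq_sym (negbTE ji) scale0r.
Qed.

Lemma lin_indep_dual n (h : 'I_n -> V) : lin_indep h ->
  exists g : 'I_n -> V -> k^o,
    (forall i, lin (g i)) /\ forall i j, g i (h j) = (i == j)%:R.
Proof.
move=> h_indep.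
suff dual i : exists g : V -> k^o, lin g /\ forall j, g (h j) = (i == j)%:R.
  exists (fun i => projT1 (cid (dual i))).
  by split=> [i|i j]; case: (cid (dual i)) => g' [].
pose S z := exists c : 'I_n -> k, c i = 0 /\ z = \sum_j c j *: h j.
have S_sub : subspace S.
  split.
    by exists (fun _ => 0); split=> //; rewrite big1 // => j _; rewrite scale0r.
  move=> a _ _ [c [ci ->]] [d [di ->]]; exists (fun j => a * c j + d j); split.
    by rewrite ci di mulr0 addr0.
  by rewrite scaler_sumr -big_split /=; apply: eq_bigr => j _; rewrite scalerDl scalerA.
have Shi : ~ S (h i).
  move=> [c [ci hiE]].
  have rel : \sum_j (c j - (i == j)%:R) *: h j = 0.
    under eq_bigr do rewrite scalerBl.
    by rewrite sumrB sum_kronecker -hiE subrr.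
  by move/eqP: (h_indep _ rel i); rewrite ci eqxx sub0r oppr_eq0 oner_eq0.
have [g [g_lin gS gi]] := separate_vector S_sub Shi.
exists g; split=> // j; have [<-|ij] := eqVneq i j; first by rewrite gi.
rewrite gS //; exists (fun l => (j == l)%:R); split; first by rewrite eq_sym (negbTE ij).
by rewrite sum_kronecker.
Qed.

End Families.

Lemma bilin_sum_reduce (U V T : lmodType k) (b : U -> V -> T) : bilin b ->
  forall m (x : 'I_m.+1 -> U) (h : 'I_m.+1 -> V) (c : 'I_m.+1 -> k) j,
  c j != 0 -> \sum_i c i *: x i = 0 ->
  exists (x' : 'I_m -> U) (h' : 'I_m -> V),
    \sum_i b (x i) (h i) = \sum_i b (x' i) (h' i).
Proof.
move=> [bl br] m x h c j cj0; rewrite (bigD1_ord j) //= => rel.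
exists (fun i => x (lift j i)), (fun i => h (lift j i) - (c (lift j i) / c j) *: h j).
have xjE : x j = - (c j)^-1 *: \sum_(i < m) c (lift j i) *: x (lift j i).
  have -> : \sum_(i < m) c (lift j i) *: x (lift j i) = - (c j *: x j).
    by apply/eqP; rewrite -addr_eq0 addrC rel.
  by rewrite scaleNr scalerN opprK scalerA mulVf // scale1r.
have bjE : b (x j) (h j) = - \sum_(i < m) (c (lift j i) / c j) *: b (x (lift j i)) (h j).
  rewrite xjE scaleNr (linN (bl _)) (linZ (bl _)) (lin_sum (bl _)) scaler_sumr.
  by congr (- _); apply: eq_bigr => i _; rewrite (linZ (bl _)) scalerA mulrC.
rewrite (bigD1_ord j) //= bjE -sumrN -big_split /=; apply: eq_bigr => i _.
by rewrite (linB (br _)) (linZ (br _)) addrC.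
Qed.

End LinearAlgebra.

Arguments lin_id {k U}.
Arguments lin_zero {k U V}.

#[local] Hint Resolve lin_id dpi_lin drho_lin cEps_lin cDelta_lin : core.

Section Tensors.
Context {k : fieldType} {tn : forall U V : lmodType k, tensor U V}.
Local Notation tm := (tm tn).
Local Notation tmap := (tmap (tn:=tn)).
Local Notation tens := (tens tn).
Local Notation tl U V := (@tlift _ U V (tn U V) _).

Lemma tm_linl (U V : lmodType k) (v : V) : lin (fun u : U => tm u v).
Proof. exact: (tmul_bilin (tn U V)).1. Qed.

Lemma tm_linr (U V : lmodType k) (u : U) : lin (fun v : V => tm u v).
Proof. exact: (tmul_bilin (tn U V)).2. Qed.

Lemma tlift_tm (U V W : lmodType k) (b : U -> V -> W) :
  bilin b -> forall u v, tl U V b (tm u v) = b u v.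
Proof. exact: tlift_tmul. Qed.

Lemma tens_ext (U V W : lmodType k) (g1 g2 : tens U V -> W) : lin g1 -> lin g2 ->
  (forall u v, g1 (tm u v) = g2 (tm u v)) -> forall t, g1 t = g2 t.
Proof.
move=> g1_lin g2_lin E t.
by rewrite (tlift_uniq (b := fun u v => g1 (tm u v)) g1_lin) //
           (tlift_uniq (b := fun u v => g1 (tm u v)) g2_lin).
Qed.

Lemma tens_ext3l (U V W Z : lmodType k) (g1 g2 : tens (tens U V) W -> Z) :
  lin g1 -> lin g2 ->
  (forall u v w, g1 (tm (tm u v) w) = g2 (tm (tm u v) w)) -> forall t, g1 t = g2 t.
Proof.
move=> g1_lin g2_lin E; apply: tens_ext => // t w.
have lin_w (g : tens (tens U V) W -> Z) : lin g -> lin (fun t => g (tm t w)).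
  exact: lin_comp (tm_linl w).
exact: (tens_ext (lin_w _ g1_lin) (lin_w _ g2_lin) (fun u v => E u v w) t).
Qed.

Lemma tens_ext3r (U V W Z : lmodType k) (g1 g2 : tens U (tens V W) -> Z) :
  lin g1 -> lin g2 ->
  (forall u v w, g1 (tm u (tm v w)) = g2 (tm u (tm v w))) -> forall t, g1 t = g2 t.
Proof.
move=> g1_lin g2_lin E; apply: tens_ext => // u t.
have lin_u (g : tens U (tens V W) -> Z) : lin g -> lin (fun t => g (tm u t)).
  exact: lin_comp (tm_linr u).
exact: (tens_ext (lin_u _ g1_lin) (lin_u _ g2_lin) (E u) t).
Qed.

Lemma tens_span (U V : lmodType k) (t : tens U V) :
  exists s : seq (U * V), t = \sum_(p <- s) tm p.1 p.2.
Proof.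
pose S (t : tens U V) := exists s : seq (U * V), t = \sum_(p <- s) tm p.1 p.2.
have S_sub : subspace S.
  split; first by exists [::]; rewrite big_nil.
  move=> a _ _ [s ->] [s' ->]; exists ([seq (a *: p.1, p.2) | p <- s] ++ s').
  rewrite big_cat big_map /= scaler_sumr; congr (_ + _).
  by apply: eq_bigr => p _; rewrite (linZ (tm_linl _)).
move: t; apply: (subspace_full S_sub) => psi psi_lin psiS.
apply: (tens_ext (g2 := fun _ => 0)) => // [|u v]; first exact: lin_zero.
by apply: psiS; exists [:: (u, v)]; rewrite big_seq1.
Qed.

Lemma bilin_tm_comp (U U' V V' : lmodType k) (f : U -> U') (g : V -> V') :
  lin f -> lin g -> bilin (fun u v => tm (f u) (g v)).
Proof.
move=> f_lin g_lin; split=> [v|u] a x y /=; first by rewrite f_lin tm_linl.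
by rewrite g_lin tm_linr.
Qed.

Lemma tmap_lin (U U' V V' : lmodType k) (f : U -> U') (g : V -> V') :
  lin f -> lin g -> lin (tmap f g).
Proof. by move=> f_lin g_lin; apply/tlift_lin/bilin_tm_comp. Qed.

Lemma tmap_tm (U U' V V' : lmodType k) (f : U -> U') (g : V -> V') :
  lin f -> lin g -> forall u v, tmap f g (tm u v) = tm (f u) (g v).
Proof. by move=> f_lin g_lin; apply/tlift_tm/bilin_tm_comp. Qed.

Lemma tmap_comp (U U' U'' V V' V'' : lmodType k)
    (f : U -> U') (g : V -> V') (f' : U' -> U'') (g' : V' -> V'') :
  lin f -> lin g -> lin f' -> lin g' ->
  forall t, tmap f' g' (tmap f g t) = tmap (f' \o f) (g' \o g) t.
Proof.
move=> f_lin g_lin f'_lin g'_lin; apply: tens_ext.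
- by apply: lin_comp; apply: tmap_lin.
- by apply: tmap_lin; apply: lin_comp.
by move=> u v; rewrite !tmap_tm //; apply: lin_comp.
Qed.

Lemma eq_tmap (U U' V V' : lmodType k) (f f' : U -> U') (g g' : V -> V') :
  f =1 f' -> g =1 g' -> tmap f g =1 tmap f' g'.
Proof. by move=> /funext-> /funext->. Qed.

Lemma tmap_id (U V : lmodType k) (t : tens U V) : tmap id id t = t.
Proof.
by apply: (tens_ext (g2 := id)) => // [|u v]; [apply: tmap_lin | rewrite tmap_tm].
Qed.

Lemma tmap_eq_id (U V : lmodType k) (f : U -> U) (g : V -> V) :
  f =1 id -> g =1 id -> forall t, tmap f g t = t.
Proof. by move=> fE gE t; rewrite (eq_tmap fE gE) tmap_id. Qed.

Lemma tmap_inj (U U' V : lmodType k) (f : U -> U') :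
  lin f -> injective f -> injective (tmap f (@id V)).
Proof.
move=> f_lin f_inj; have [h [h_lin fK]] := lin_left_inverse f_lin f_inj.
apply: (can_inj (g := tmap h id)) => t.
by rewrite tmap_comp // tmap_eq_id.
Qed.

Lemma assoc_inv_bilin_inner (U V W : lmodType k) (u : U) :
  bilin (fun (v : V) (w : W) => tm (tm u v) w).
Proof.
split=> [w|v] a x y /=; first by rewrite (tm_linr u) (tm_linl w).
by rewrite tm_linr.
Qed.

Lemma assoc_inv_bilin (U V W : lmodType k) :
  bilin (fun (u : U) (t : tens V W) => tl V W (fun v w => tm (tm u v) w) t).
Proof.
split=> [t|u] a x y /=; last exact/tlift_lin/assoc_inv_bilin_inner.
move: t; apply: tens_ext => [c t1 t2|c t1 t2|v w].
- by rewrite (tlift_lin (assoc_inv_bilin_inner _ _ _)).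
- rewrite !(tlift_lin (assoc_inv_bilin_inner _ _ _)).
  by rewrite !scalerDr !scalerA [a * c]mulrC addrACA.
by rewrite !tlift_tm; try apply: assoc_inv_bilin_inner; rewrite (tm_linl v) (tm_linl w).
Qed.

Lemma assoc_inv_lin (U V W : lmodType k) : lin (@assoc_inv _ tn U V W).
Proof. exact/tlift_lin/assoc_inv_bilin. Qed.

Lemma assoc_inv_tm (U V W : lmodType k) (u : U) (v : V) (w : W) :
  assoc_inv (tm u (tm v w)) = tm (tm u v) w.
Proof.
rewrite /assoc_inv tlift_tm ?tlift_tm //; first exact: assoc_inv_bilin_inner.
exact: assoc_inv_bilin.
Qed.

Lemma assoc_bilin_inner (U V W : lmodType k) (w : W) :
  bilin (fun (u : U) (v : V) => tm u (tm v w)).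
Proof.
split=> [v|u] a x y /=; first by rewrite tm_linl.
by rewrite (tm_linl w) (tm_linr u).
Qed.

Lemma assoc_bilin (U V W : lmodType k) :
  bilin (fun (t : tens U V) (w : W) => tl U V (fun u v => tm u (tm v w)) t).
Proof.
split=> [w|t] a x y /=; first exact/tlift_lin/assoc_bilin_inner.
move: t; apply: tens_ext => [c t1 t2|c t1 t2|u v].
- by rewrite (tlift_lin (assoc_bilin_inner _ _ _)).
- rewrite !(tlift_lin (assoc_bilin_inner _ _ _)).
  by rewrite !scalerDr !scalerA [a * c]mulrC addrACA.
by rewrite !tlift_tm; try apply: assoc_bilin_inner; rewrite (tm_linr v) (tm_linr u).
Qed.

Lemma assoc_lin (U V W : lmodType k) : lin (@assoc _ tn U V W).
Proof. exact/tlift_lin/assoc_bilin. Qed.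

Lemma assoc_tm (U V W : lmodType k) (u : U) (v : V) (w : W) :
  assoc (tm (tm u v) w) = tm u (tm v w).
Proof.
by rewrite /assoc tlift_tm ?tlift_tm //; [apply: assoc_bilin_inner | apply: assoc_bilin].
Qed.

Lemma assocK (U V W : lmodType k) : cancel (@assoc _ tn U V W) (@assoc_inv _ tn U V W).
Proof.
apply: (tens_ext3l (g2 := id)) => // [a x y|u v w] /=.
  by rewrite assoc_lin assoc_inv_lin.
by rewrite assoc_tm assoc_inv_tm.
Qed.

Lemma assoc_inv_tmap (U U' V V' W W' : lmodType k)
    (f : U -> U') (g : V -> V') (h : W -> W') :
  lin f -> lin g -> lin h -> forall t,
  assoc_inv (tmap f (tmap g h) t) = tmap (tmap f g) h (assoc_inv t).
Proof.
move=> f_lin g_lin h_lin; apply: tens_ext3r => [a x y|a x y|u v w] /=.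
- by rewrite (tmap_lin f_lin (tmap_lin g_lin h_lin)) assoc_inv_lin.
- by rewrite assoc_inv_lin (tmap_lin (tmap_lin f_lin g_lin) h_lin).
rewrite !tmap_tm ?assoc_inv_tm ?tmap_tm //; exact: tmap_lin.
Qed.

Definition contr (Z V : lmodType k) (g : V -> k^o) : tens Z V -> Z :=
  tl Z V (fun z v => g v *: z).

Lemma contr_bilin (Z V : lmodType k) (g : V -> k^o) :
  lin g -> bilin (fun (z : Z) v => g v *: z).
Proof.
move=> g_lin; split=> [v|z] a x y /=; first by rewrite scalerDr !scalerA mulrC.
by rewrite g_lin scalerDl scalerA.
Qed.

Lemma contr_lin (Z V : lmodType k) (g : V -> k^o) : lin g -> lin (contr (Z:=Z) g).
Proof. by move=> g_lin; apply/tlift_lin/contr_bilin. Qed.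

Lemma contr_tm (Z V : lmodType k) (g : V -> k^o) :
  lin g -> forall z v, contr (Z:=Z) g (tm z v) = g v *: z.
Proof. by move=> g_lin; apply/tlift_tm/contr_bilin. Qed.


Lemma tens_min_rep (U V : lmodType k) (t : tens U V) :
  exists n (x : 'I_n -> U) (h : 'I_n -> V),
    [/\ t = \sum_i tm (x i) (h i), lin_indep x & lin_indep h].
Proof.
pose rep n := `[< exists (x : 'I_n -> U) (h : 'I_n -> V), t = \sum_i tm (x i) (h i) >].
have rep_ex : exists n, rep n.
  have [s tE] := tens_span t; exists (size s); apply/asboolP.
  exists (fun i => (nth (0, 0) s i).1), (fun i => (nth (0, 0) s i).2).
  by rewrite tE (big_nth (0, 0)) big_mkord.
case: (ex_minnP rep_ex) => -[|m] /asboolP[x [h tE]] rep_min.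
  by exists 0, x, h; split=> // c _ [].
have no_shorter (x' : 'I_m -> U) (h' : 'I_m -> V) : t <> \sum_i tm (x' i) (h' i).
  move=> E; have /rep_min : rep m by apply/asboolP; exists x', h'.
  by rewrite ltnn.
have tm_bilin : bilin (fun (u : U) (v : V) => tm u v).
  by split=> [v|u]; [exact: tm_linl | exact: tm_linr].
have tm_bilinC : bilin (fun (v : V) (u : U) => tm u v).
  by split=> [u|v]; [exact: tm_linr | exact: tm_linl].
exists m.+1, x, h; split=> // c rel i; apply/eqP/negPn/negP => ci.
  have [x' [h' E]] := bilin_sum_reduce tm_bilin h ci rel.
  by apply: (no_shorter x' h'); rewrite tE E.
have [h' [x' E]] := bilin_sum_reduce tm_bilinC x ci rel.
by apply: (no_shorter x' h'); rewrite tE E.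
Qed.

End Tensors.

#[local] Hint Extern 0 (lin (Defs.tmap _ _)) => solve [apply: tmap_lin; done] : core.

Section Pushouts.
Variables (k : fieldType) (A B C : lmodType k) (f : A -> B) (g : A -> C).
Variable P : pushout f g.

Lemma po_lift (W : lmodType k) (u : B -> W) (v : C -> W) :
  lin u -> lin v -> (forall a, u (f a) = v (g a)) ->
  exists w : pcar P -> W,
    [/\ lin w, forall b, w (pl P b) = u b & forall c, w (pr P c) = v c].
Proof.
move=> u_lin v_lin uv; have [w [[w_lin [wl wr]] _]] := p_univ P u_lin v_lin uv.
by exists w.
Qed.

Lemma po_span z : exists b c, z = pl P b + pr P c.
Proof.
pose S z := exists b c, z = pl P b + pr P c.
have S_sub : subspace S.
  split; first by exists 0, 0; rewrite (lin0 (pl_lin P)) (lin0 (pr_lin P)) addr0.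
  move=> a _ _ [b1 [c1 ->]] [b2 [c2 ->]]; exists (a *: b1 + b2), (a *: c1 + c2).
  by rewrite (pl_lin P) (pr_lin P) scalerDr addrACA.
move: z; apply: (subspace_full S_sub) => psi psi_lin psiS.
have [w [_ w_uniq]] := p_univ P (@lin_zero _ B k^o) (@lin_zero _ C k^o) (fun => erefl).
have <- : w = psi.
  apply: w_uniq; split=> //; split=> [b|c]; apply: psiS; [exists b, 0 | exists 0, c].
    by rewrite (lin0 (pr_lin P)) addr0.
  by rewrite (lin0 (pl_lin P)) add0r.
by have -> : w = (fun _ => 0) by apply: w_uniq; split; [exact: lin_zero | split].
Qed.

Lemma po_pr_surj : (forall b, exists a, f a = b) -> forall z, exists c, pr P c = z.
Proof.
move=> f_surj z; have [b [c ->]] := po_span z; have [a <-] := f_surj b.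
by exists (g a + c); rewrite p_comm (linD (pr_lin P)).
Qed.

Hypotheses (f_lin : lin f) (g_lin : lin g).

Lemma po_ker b c : pl P b = pr P c -> exists a, b = f a /\ c = g a.
Proof.
move=> E; apply: contrapT => nE.
pose S (z : (B * C)%type) := exists a, z = (f a, g a).
have S_sub : subspace S.
  split; first by exists 0; rewrite (lin0 f_lin) (lin0 g_lin).
  by move=> x _ _ [a1 ->] [a2 ->]; exists (x *: a1 + a2); rewrite f_lin g_lin.
have Sbc : ~ S (b, c) by move=> [a [bE cE]]; apply: nE; exists a.
have [psi [psi_lin psiS psi1]] := separate_vector S_sub Sbc.
have pairE x (b1 b2 : B) (c1 c2 : C) :
  x *: (b1, c1) + (b2, c2) = (x *: b1 + b2, x *: c1 + c2) by [].
have pairD (b1 b2 : B) (c1 c2 : C) : (b1, c1) + (b2, c2) = (b1 + b2, c1 + c2) by [].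
have psiE b' c' : psi (b', c') = psi (b', 0) + psi (0, c').
  by rewrite -(linD psi_lin) pairD addr0 add0r.
have u_lin : lin (fun b => psi (b, 0)).
  by move=> x y z; rewrite -psi_lin pairE scaler0 addr0.
have v_lin : lin (fun c => - psi (0, c)).
  by move=> x y z; rewrite scalerN -opprD -psi_lin pairE scaler0 addr0.
have uv a : psi (f a, 0) = - psi (0, g a).
  by apply/eqP; rewrite -subr_eq0 opprK -psiE psiS //; exists a.
have [w [_ wl wr]] := po_lift u_lin v_lin uv.
move/eqP: psi1; rewrite psiE -[psi (b, 0)]wl E wr addNr eq_sym.
by rewrite oner_eq0.
Qed.

Lemma po_pr_eq0 c : pr P c = 0 -> exists a, f a = 0 /\ c = g a.
Proof.
move=> c0; have [|a [a0 ->]] := @po_ker 0 c; last by exists a.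
by rewrite c0 (lin0 (pl_lin P)).
Qed.

End Pushouts.

Lemma bij_inj_surj (T1 T2 : Type) (f : T1 -> T2) :
  injective f -> (forall y, exists x, f x = y) -> bijective f.
Proof.
move=> f_inj f_surj; pose g y := projT1 (cid (f_surj y)).
have fK : cancel g f by move=> y; rewrite /g; case: cid.
by exists g => // x; apply: f_inj; rewrite fK.
Qed.

Section PartialComoduleDatum.
Variables (k : fieldType) (tn : forall U V : lmodType k, tensor U V).
Variable po : forall (A B C : lmodType k) (f : A -> B) (g : A -> C), pushout f g.
Variables (H : lmodType k) (C : coalgebra tn H) (X : lmodType k) (D : pdatum tn H X).
Local Notation tm := (tm tn).
Local Notation tmap := (tmap (tn:=tn)).
Local Notation tens := (tens tn).
Local Notation contr := (contr (tn:=tn)).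
Local Notation pi := (dpi D).
Local Notation rho := (drho D).
Local Notation eps := (cEps C).
Local Notation Delta := (cDelta C).
Local Notation pi_lin := (dpi_lin D).
Local Notation rho_lin := (drho_lin D).
Local Notation pi_surj := (@dpi_surj _ _ _ _ D).
Local Notation eps_lin := (cEps_lin C).
Local Notation Delta_lin := (cDelta_lin C).

Definition rhoH (t : tens X H) : tens (dXH D) H := tmap rho id t.

Definition piDelta (t : tens X H) : tens (dXH D) H :=
  tmap pi id (assoc_inv (tmap id Delta t)).

Definition counital : Prop :=
  forall t x, pi t = rho x -> tmap id eps t = tm x (1 : k^o).

Definition kernel_coassoc : Prop := forall t, pi t = 0 -> rhoH t = piDelta t.

Lemma rhoH_lin : lin rhoH.
Proof. exact: tmap_lin rho_lin lin_id. Qed.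

Lemma piDelta_lin : lin piDelta.
Proof.
move=> a u v; rewrite /piDelta (tmap_lin lin_id Delta_lin) assoc_inv_lin.
by rewrite (tmap_lin pi_lin lin_id).
Qed.

Lemma pi_assoc_inv_lin :
  lin (fun w : tens X (tens H H) => tmap pi id (assoc_inv w)).
Proof. by move=> a u v; rewrite assoc_inv_lin (tmap_lin pi_lin lin_id). Qed.

Lemma po_XHH_pi t : pl (po_XHH po D) (pi t) = pr (po_XHH po D) (rhoH t).
Proof. exact: p_comm. Qed.

Lemma po_XHbH_pi t :
  pl (po_XHbH po C D) (pl (po_XHoH po C D) (pi t)) = pr (po_XHbH po C D) (piDelta t).
Proof. by rewrite p_comm p_comm. Qed.

Lemma po_Theta_coassoc t : rhoH t = piDelta t ->
  pl (po_Theta po C D) (pl (po_XHH po D) (pi t))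
  = pr (po_Theta po C D) (pl (po_XHbH po C D) (pl (po_XHoH po C D) (pi t))).
Proof. by move=> coassoc_t; rewrite po_XHbH_pi po_XHH_pi coassoc_t p_comm. Qed.

Lemma counital_po_Xk : counital ->
  bijective (pr (po_Xk po C D)) /\
  forall x, pl (po_Xk po C D) (rho x) = pr (po_Xk po C D) (tm x (1 : k^o)).
Proof.
move=> counit; split; last first.
  by move=> x; have [t tE] := pi_surj (rho x); rewrite -tE p_comm (counit _ x).
apply: bij_inj_surj; last exact/po_pr_surj/pi_surj.
have ker_eps t : pi t = 0 -> tmap id eps t = 0.
  by rewrite -(lin0 rho_lin) => /counit ->; rewrite (lin0 (tm_linl _)).
have [u [u_lin uE]] := lin_factor pi_lin (tmap_lin lin_id eps_lin) pi_surj ker_eps.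
have [w [_ _ wK]] := po_lift (po_Xk po C D) u_lin lin_id uE.
exact: can_inj wK.
Qed.

Lemma kernel_coassoc_geometric : kernel_coassoc -> geometric po C D.
Proof.
(* theta sends the class of [pi t] to that of [piDelta t]; this is well defined
   because [rhoH] and [piDelta] agree on the kernel of [pi]. *)
move=> kc.
pose XHH := po_XHH po D; pose XHoH := po_XHoH po C D; pose XHbH := po_XHbH po C D.
have XHH_ker t : pi t = 0 -> pr XHH (piDelta t) = 0.
  by move=> t0; rewrite -kc // -po_XHH_pi t0 (lin0 (pl_lin _)).
have [u1 [u1_lin u1E]] :=
  lin_factor pi_lin (lin_comp piDelta_lin (pr_lin XHH)) pi_surj XHH_ker.
have [u [u_lin _ uE]] :=
  po_lift XHoH u1_lin (lin_comp pi_assoc_inv_lin (pr_lin XHH)) u1E.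
have [th [th_lin _ thE]] := po_lift XHbH u_lin (pr_lin XHH) uE.
exists th; split=> //; split=> //.
have XHbH_surj : forall z, exists c, pr XHbH c = z.
  exact: (po_pr_surj (P := XHbH) (po_pr_surj (P := XHoH) pi_surj)).
apply: bij_inj_surj => [z1 z2|z]; last first.
  by have [c <-] := po_pr_surj (P := XHH) pi_surj z; exists (pr XHbH c).
have [[c1 <-] [c2 <-]] := (XHbH_surj z1, XHbH_surj z2).
rewrite !thE => /eqP; rewrite -subr_eq0 -(linB (pr_lin XHH)) => /eqP c12.
apply/eqP; rewrite -subr_eq0 -(linB (pr_lin XHbH)).
have [a [a0 ->]] := po_pr_eq0 pi_lin rhoH_lin c12.
by rewrite -/(rhoH a) kc // -po_XHbH_pi a0 !(lin0 (pl_lin _)).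
Qed.

Lemma geometric_lax : geometric po C D -> lax po C D.
Proof. by case=> th [th_lin [thE _]]; exists th. Qed.

Section Quasi.
Hypothesis quasiD : quasi po C D.

Lemma quasi_counital : counital.
Proof.
case: quasiD => [[g prK _] [rho_eps _]] t x tE.
by apply: (can_inj prK); rewrite -p_comm tE rho_eps.
Qed.

Lemma quasi_retraction : exists Phi : tens (dXH D) H -> tens X H,
  [/\ lin Phi, cancel rhoH Phi & cancel piDelta Phi].
Proof.
have counit := quasi_counital.
pose r : tens X k^o -> X := contr (fun c : k^o => c).
have r_lin : lin r := contr_lin lin_id.
have ker_eps t : pi t = 0 -> r (tmap id eps t) = 0.
  by rewrite -(lin0 rho_lin) => /counit ->; rewrite (lin0 (tm_linl _)) (lin0 r_lin).
have [e [e_lin eE]] :=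
  lin_factor pi_lin (lin_comp (tmap_lin lin_id eps_lin) r_lin) pi_surj ker_eps.
have e_rho x : e (rho x) = x.
  have [t tE] := pi_surj (rho x).
  by rewrite -tE eE /= (counit _ _ tE) /r contr_tm // scale1r.
exists (tmap e id); split=> [|t|]; first exact: tmap_lin.
  rewrite /rhoH tmap_comp //.
  exact: tmap_eq_id.
apply: (tens_ext (g1 := tmap e id \o piDelta) (g2 := id)) => // [|x h].
  exact: lin_comp piDelta_lin (tmap_lin e_lin lin_id).
pose sc := fun c : k^o => c *: x.
have sc_lin : lin sc by move=> a b c; rewrite /sc scalerDl scalerA.
have split_Delta (w : tens H H) :
    tmap e id (tmap pi id (assoc_inv (tm x w))) = tmap sc id (tmap eps id w).
  move: w; apply: tens_ext => [a u v|a u v|a b].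
  - by rewrite (tm_linr x) assoc_inv_lin (tmap_lin pi_lin lin_id) (tmap_lin e_lin lin_id).
  - by rewrite (tmap_lin eps_lin lin_id) (tmap_lin sc_lin lin_id).
  rewrite assoc_inv_tm (tmap_tm pi_lin lin_id) (tmap_tm e_lin lin_id).
  rewrite (tmap_tm eps_lin lin_id) (tmap_tm sc_lin lin_id) eE /=.
  by rewrite (tmap_tm lin_id eps_lin) /r contr_tm.
rewrite /= /piDelta (tmap_tm lin_id Delta_lin) split_Delta (counit_l C).
by rewrite (tmap_tm sc_lin lin_id) /sc scale1r.
Qed.

Lemma quasi_coassoc_lift x : exists s, pi s = rho x /\ rhoH s = piDelta s.
Proof.
have [Phi [_ rhoHK piDeltaK]] := quasi_retraction.
have [t tE] := pi_surj (rho x).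
have [_ [_ /(_ x)]] := quasiD; rewrite -tE po_XHbH_pi po_XHH_pi.
case/(po_ker (pr_lin _) (pr_lin _)) => c [cE1 cE2].
have [a [a0 aE]] : exists a, pi a = 0 /\ rhoH t - c = rhoH a.
  apply: (po_pr_eq0 (P := po_XHH po D) pi_lin rhoH_lin).
  by rewrite (linB (pr_lin _)) cE1 subrr.
have [w [w0 wE]] : exists w, pr (po_XHoH po C D) w = 0 /\
    piDelta t - c = tmap pi id (assoc_inv w).
  apply: (po_pr_eq0 (P := po_XHbH po C D) (pr_lin _) pi_assoc_inv_lin).
  by rewrite (linB (pr_lin _)) cE2 subrr.
have [b [b0 bE]] := po_pr_eq0 pi_lin (tmap_lin lin_id Delta_lin) w0.
have cE : rhoH (t - a) = piDelta (t - b).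
  rewrite (linB rhoH_lin) (linB piDelta_lin) -aE.
  by rewrite [piDelta b]/piDelta -bE -wE !subKr.
have ab : t - a = t - b by rewrite -[LHS]rhoHK cE piDeltaK.
exists (t - a); split; first by rewrite (linB pi_lin) a0 subr0.
by rewrite cE -ab.
Qed.

Lemma lax_kernel_coassoc : lax po C D -> kernel_coassoc.
Proof.
move=> [th [th_lin thE]] t t0.
have [Phi [_ rhoHK piDeltaK]] := quasi_retraction.
have : pr (po_XHH po D) (piDelta t) = 0.
  by rewrite -thE -po_XHbH_pi t0 !(lin0 (pl_lin _)) (lin0 th_lin).
case/(po_pr_eq0 pi_lin rhoH_lin) => a [a0 aE].
by rewrite aE -[a]rhoHK -aE piDeltaK.
Qed.

End Quasi.

Lemma quasiP : quasi po C D <->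
  counital /\ forall x, exists s, pi s = rho x /\ rhoH s = piDelta s.
Proof.
split=> [quasiD|[counit lifts]].
  by split; [exact: quasi_counital | exact: quasi_coassoc_lift].
have [pr_bij rho_eps] := counital_po_Xk counit.
split=> //; split=> // x; have [s [<-]] := lifts x; exact: po_Theta_coassoc.
Qed.

Section Hit.

(* [hit g h] is [g ⇀ h = h_(1) g(h_(2))] in Sweedler notation. *)
Definition hit (g : H -> k^o) (h : H) : H := contr g (Delta h).

Variables (g : H -> k^o) (g_lin : lin g).

Lemma hit_lin : lin (hit g).
Proof. by move=> a u v; rewrite /hit Delta_lin (contr_lin g_lin). Qed.

#[local] Hint Resolve hit_lin : core.

Lemma contr_piDelta t : contr g (piDelta t) = pi (tmap id (hit g) t).
Proof.
move: t; apply: tens_ext => [a u v|a u v|x h].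
- by rewrite piDelta_lin (contr_lin g_lin).
- by rewrite (tmap_lin lin_id hit_lin) pi_lin.
rewrite /piDelta !tmap_tm //.
rewrite /hit; move: (Delta h); apply: tens_ext => [a u v|a u v|h1 h2].
- by rewrite (tm_linr x) assoc_inv_lin (tmap_lin pi_lin lin_id) (contr_lin g_lin).
- by rewrite (contr_lin g_lin) (tm_linr x) pi_lin.
rewrite assoc_inv_tm tmap_tm // !contr_tm //.
by rewrite (linZ (tm_linr x)) (linZ pi_lin).
Qed.

Lemma rhoH_hit t : rhoH (tmap id (hit g) t) = tmap id (hit g) (rhoH t).
Proof. by rewrite /rhoH !tmap_comp. Qed.

Lemma Delta_contr (w : tens H H) : Delta (contr g w) = contr g (tmap Delta id w).
Proof.
move: w; apply: tens_ext => [a u v|a u v|h1 h2].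
- by rewrite (contr_lin g_lin) Delta_lin.
- by rewrite (tmap_lin Delta_lin lin_id) (contr_lin g_lin).
by rewrite tmap_tm // !contr_tm // (linZ Delta_lin).
Qed.

Lemma contr_assoc_inv (Z : lmodType k) (x : Z) (w : tens H H) :
  contr g (assoc_inv (tm x w)) = tm x (contr g w).
Proof.
move: w; apply: tens_ext => [a u v|a u v|h1 h2].
- by rewrite (tm_linr x) assoc_inv_lin (contr_lin g_lin).
- by rewrite (contr_lin g_lin) (tm_linr x).
by rewrite assoc_inv_tm !contr_tm // (linZ (tm_linr x)).
Qed.

Lemma piDelta_hit t : piDelta (tmap id (hit g) t) = tmap id (hit g) (piDelta t).
Proof.
move: t; apply: tens_ext => [a u v|a u v|x h].
- by rewrite (tmap_lin lin_id hit_lin) piDelta_lin.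
- by rewrite piDelta_lin (tmap_lin lin_id hit_lin).
rewrite /piDelta !tmap_tm // {1}/hit Delta_contr -(assocK (tmap Delta id (Delta h))).
rewrite coassoc; move: (Delta h); apply: tens_ext => [a u v|a u v|h1 h2].
- rewrite (tmap_lin lin_id Delta_lin) assoc_inv_lin (contr_lin g_lin) (tm_linr x).
  by rewrite assoc_inv_lin (tmap_lin pi_lin lin_id).
- by rewrite (tm_linr x) pi_assoc_inv_lin (tmap_lin lin_id hit_lin).
rewrite !tmap_tm // contr_assoc_inv !assoc_inv_tm !tmap_tm //.
Qed.

End Hit.

End PartialComoduleDatum.

Section Morphisms.
Variables (k : fieldType) (tn : forall U V : lmodType k, tensor U V).
Variables (H : lmodType k) (C : coalgebra tn H) (Y X : lmodType k).
Variables (E : pdatum tn H Y) (D : pdatum tn H X) (f : Y -> X) (fH : dXH E -> dXH D).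
Hypothesis fmorph : pmorph E D f fH.
Local Notation tmap := (tmap (tn:=tn)).

Let f_lin : lin f := fmorph.1.
Let fH_lin : lin fH := fmorph.2.1.
Let fH_rho : forall y, fH (drho E y) = drho D (f y) := fmorph.2.2.1.
Let fH_pi : forall t, fH (dpi E t) = dpi D (tmap f id t) := fmorph.2.2.2.
#[local] Hint Resolve f_lin fH_lin : core.

Lemma pmorph_rhoH t : tmap fH id (rhoH E t) = rhoH D (tmap f id t).
Proof. by rewrite /rhoH !tmap_comp //; apply: eq_tmap. Qed.

Lemma pmorph_piDelta t : tmap fH id (piDelta C E t) = piDelta C D (tmap f id t).
Proof.
have assoc_f : tmap (tmap f id) id (assoc_inv (tmap id (cDelta C) t))
    = assoc_inv (tmap id (cDelta C) (tmap f id t)).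
  rewrite -assoc_inv_tmap // !tmap_comp //.
  by apply: congr1; apply: eq_tmap => // h /=; rewrite tmap_id.
rewrite /piDelta -assoc_f !tmap_comp //.
by apply: eq_tmap => // u /=; rewrite fH_pi.
Qed.

Lemma pmorph_counital : injective f -> counital C D -> counital C E.
Proof.
move=> f_inj counit t y tE; apply: (tmap_inj f_lin f_inj).
have ftE : dpi D (tmap f id t) = drho D (f y) by rewrite -fH_pi tE fH_rho.
by rewrite tmap_tm // -(counit _ _ ftE) !tmap_comp //; apply: eq_tmap.
Qed.

Lemma pmorph_coassoc : injective fH -> forall t,
  rhoH D (tmap f id t) = piDelta C D (tmap f id t) -> rhoH E t = piDelta C E t.
Proof.
move=> fH_inj t coassoc_ft; apply: (tmap_inj fH_lin fH_inj).
by rewrite pmorph_rhoH pmorph_piDelta.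
Qed.

End Morphisms.

Section SubspaceType.
Variables (k : fieldType) (U : lmodType k) (S : U -> Prop) (S_sub : subspace S).

(* [S_sub] occurs in the body so that the closedness instance below is found
   by unification on [subspace_pred S_sub]. *)
Definition subspace_pred : {pred U} := fun u => let _ := S_sub in `[< S u >].

Lemma subspace_pred_closed : GRing.submod_closed subspace_pred.
Proof.
split; first by apply/asboolP; case: S_sub.
by move=> a u v /asboolP Su /asboolP Sv; apply/asboolP; apply: S_sub.2.
Qed.

HB.instance Definition _ :=
  GRing.isSubmodClosed.Build k U subspace_pred subspace_pred_closed.

Record subspace_type :=
  SubspaceElt { subspace_val : U; _ : subspace_val \in subspace_pred }.
HB.instance Definition _ := [isSub for subspace_val].
HB.instance Definition _ := [Choice of subspace_type by <:].
HB.instance Definition _ := [SubChoice_isSubLmodule of subspace_type by <:].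

Lemma subspace_val_lin : lin subspace_val.
Proof. by []. Qed.

Lemma subspace_val_inj : injective subspace_val.
Proof. exact: val_inj. Qed.

Lemma mem_subspace_pred u : S u -> u \in subspace_pred.
Proof. by move=> Su; apply/asboolP. Qed.

Lemma subspace_predP u : u \in subspace_pred -> S u.
Proof. by move/asboolP. Qed.

End SubspaceType.

Section SubDatum.
Variables (k : fieldType) (tn : forall U V : lmodType k, tensor U V).
Variable po : forall (A B C : lmodType k) (f : A -> B) (g : A -> C), pushout f g.
Variables (H : lmodType k) (C : coalgebra tn H) (X : lmodType k) (D : pdatum tn H X).
Variables (Y : lmodType k) (f : Y -> X) (L : Y -> tens tn Y H).
Hypotheses (f_lin : lin f) (f_inj : injective f) (L_lin : lin L).
Hypothesis L_pi : forall y, dpi D (tmap f id (L y)) = drho D (f y).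
Hypothesis L_coassoc :
  forall y, rhoH D (tmap f id (L y)) = piDelta C D (tmap f id (L y)).
Local Notation tmap := (tmap (tn:=tn)).
#[local] Hint Resolve f_lin : core.

Let fH_lin : lin (tmap f (@id H)) := tmap_lin f_lin lin_id.

Definition pi_image (z : dXH D) := exists t, z = dpi D (tmap f id t).

Lemma pi_image_subspace : subspace pi_image.
Proof.
split; first by exists 0; rewrite !lin0.
by move=> a _ _ [t ->] [t' ->]; exists (a *: t + t'); rewrite fH_lin dpi_lin.
Qed.

Local Notation YH := (subspace_type pi_image_subspace).
Local Notation incl := (@subspace_val _ _ _ pi_image_subspace).

Definition sub_pi (t : tens tn Y H) : YH :=
  SubspaceElt (mem_subspace_pred pi_image_subspace (ex_intro _ t erefl)).

Definition sub_rho (y : Y) : YH := sub_pi (L y).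

Lemma incl_sub_pi t : incl (sub_pi t) = dpi D (tmap f id t).
Proof. by []. Qed.

Lemma sub_pi_lin : lin sub_pi.
Proof.
move=> a u v; apply: subspace_val_inj.
by rewrite subspace_val_lin !incl_sub_pi fH_lin dpi_lin.
Qed.

Lemma sub_pi_surj z : exists t, sub_pi t = z.
Proof.
case: z => z zS; have [t tE] := subspace_predP zS; exists t.
by apply: subspace_val_inj; rewrite incl_sub_pi.
Qed.

Lemma sub_rho_lin : lin sub_rho.
Proof. by move=> a u v; rewrite /sub_rho L_lin sub_pi_lin. Qed.

Definition sub_datum : pdatum tn H Y :=
  @PDatum k tn H Y YH sub_pi sub_rho sub_pi_lin sub_pi_surj sub_rho_lin.

Lemma sub_datum_pmorph : pmorph sub_datum D f incl.
Proof. by split; [|split; [exact: subspace_val_lin | split]]. Qed.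

Lemma sub_datum_quasi : quasi po C D -> quasi po C sub_datum.
Proof.
move=> /quasiP[counit _]; apply/quasiP; split.
  exact: pmorph_counital sub_datum_pmorph f_inj counit.
move=> y; exists (L y); split=> //.
exact: pmorph_coassoc sub_datum_pmorph (@subspace_val_inj _ _ _ _) _ (L_coassoc y).
Qed.

Lemma sub_datum_kernel_coassoc : kernel_coassoc C D -> kernel_coassoc C sub_datum.
Proof.
move=> kc t t0; apply: pmorph_coassoc sub_datum_pmorph (@subspace_val_inj _ _ _ _) _ _.
by apply: kc; rewrite -incl_sub_pi; have -> : sub_pi t = 0 := t0.
Qed.

End SubDatum.

Section FiniteLift.
Variables (k : fieldType) (tn : forall U V : lmodType k, tensor U V).
Variables (H : lmodType k) (C : coalgebra tn H) (X : lmodType k) (D : pdatum tn H X).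
Variables (n : nat) (xs : 'I_n -> X) (hs : 'I_n -> H) (g : 'I_n -> H -> k^o).
Hypotheses (xs_indep : lin_indep xs) (g_lin : forall i, lin (g i)).
Hypothesis g_dual : forall i j, g i (hs j) = (i == j)%:R.
Local Notation tm := (tm tn).
Local Notation tmap := (tmap (tn:=tn)).
Local Notation contr := (contr (tn:=tn)).
Local Notation pi := (dpi D).
Local Notation rho := (drho D).
Local Notation s := (\sum_i tm (xs i) (hs i)).
Hypothesis s_coassoc : rhoH D s = piDelta C D s.
Let hit_g_lin i : lin (hit C (g i)) := hit_lin C (g_lin i).
#[local] Hint Resolve g_lin hit_g_lin : core.

Definition comb (y : 'rV[k]_n) : X := \sum_i y 0 i *: xs i.

Lemma comb_lin : lin comb.
Proof.
move=> a y z; rewrite /comb scaler_sumr -big_split /=; apply: eq_bigr => i _.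
by rewrite !mxE scalerDl scalerA.
Qed.

#[local] Hint Resolve comb_lin : core.

Lemma comb_inj : injective comb.
Proof.
move=> y z yz; apply/rowP => i; apply/eqP; rewrite -subr_eq0; apply/eqP.
apply: (xs_indep (c := fun i => y 0 i - z 0 i)).
by under eq_bigr do rewrite scalerBl; rewrite sumrB -/(comb y) -/(comb z) yz subrr.
Qed.

Lemma comb_delta j : comb (delta_mx 0 j) = xs j.
Proof.
rewrite /comb -(sum_kronecker xs j); apply: eq_bigr => i _.
by rewrite mxE eqxx eq_sym.
Qed.

Definition hit_lift i : tens tn 'rV[k]_n H :=
  \sum_j tm (delta_mx 0 j) (hit C (g i) (hs j)).

Lemma tmap_comb_hit_lift i : tmap comb id (hit_lift i) = tmap id (hit C (g i)) s.
Proof.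
rewrite /hit_lift !lin_sum //; apply: eq_bigr => j _.
by rewrite !tmap_tm ?comb_delta.
Qed.

Lemma pi_hit i : pi (tmap id (hit C (g i)) s) = rho (xs i).
Proof.
rewrite -contr_piDelta // -s_coassoc /rhoH !lin_sum //; last exact: contr_lin.
rewrite -(sum_kronecker (fun j => rho (xs j)) i); apply: eq_bigr => j _.
by rewrite tmap_tm // contr_tm // g_dual.
Qed.

Definition comb_lift (y : 'rV[k]_n) : tens tn 'rV[k]_n H := \sum_i y 0 i *: hit_lift i.

Lemma comb_lift_lin : lin comb_lift.
Proof.
move=> a y z; rewrite /comb_lift scaler_sumr -big_split /=; apply: eq_bigr => i _.
by rewrite !mxE scalerDl scalerA.
Qed.

Lemma tmap_comb_lift y :
  tmap comb id (comb_lift y) = \sum_i y 0 i *: tmap id (hit C (g i)) s.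
Proof.
rewrite /comb_lift lin_sum //; apply: eq_bigr => i _.
by rewrite linZ // tmap_comb_hit_lift.
Qed.

Lemma comb_lift_pi y : pi (tmap comb id (comb_lift y)) = rho (comb y).
Proof.
rewrite tmap_comb_lift /comb !lin_sum //; apply: eq_bigr => i _.
by rewrite !linZ // pi_hit.
Qed.

Lemma comb_lift_coassoc y :
  rhoH D (tmap comb id (comb_lift y)) = piDelta C D (tmap comb id (comb_lift y)).
Proof.
rewrite tmap_comb_lift !lin_sum; [|exact: piDelta_lin | exact: rhoH_lin].
apply: eq_bigr => i _.
rewrite (linZ (rhoH_lin D)) (linZ (piDelta_lin C D)).
by rewrite rhoH_hit // piDelta_hit // s_coassoc.
Qed.

Lemma comb_counit x : counital C D -> pi s = rho x -> comb (\row_i cEps C (hs i)) = x.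
Proof.
move=> counit sx; have := congr1 (contr (fun c : k^o => c)) (counit _ _ sx).
rewrite contr_tm // scale1r => <-; rewrite lin_sum // lin_sum; last exact: contr_lin.
by apply: eq_bigr => i _; rewrite tmap_tm // contr_tm // mxE.
Qed.

End FiniteLift.

Theorem mainTheorem9
  (k : fieldType)
  (tn : forall U V : lmodType k, tensor U V)
  (po : forall (A B C : lmodType k) (f : A -> B) (g : A -> C), pushout f g)
  (H : lmodType k) (C : coalgebra tn H)
  (X : lmodType k) (D : pdatum tn H X) :
  quasi po C D ->
  forall x : X,
  exists (Y : vectType k) (E : pdatum tn H Y) (f : Y -> X) (fH : dXH E -> dXH D),
    [/\ quasi po C E, pmorph E D f fH, injective f, injective fH
      & exists y : Y, f y = x] /\
    (lax po C D -> lax po C E) /\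
    (geometric po C D -> geometric po C E).
Proof.
move=> quasiD x.
have [s [sx s_coassoc]] := quasi_coassoc_lift quasiD x.
have [n [xs [hs [sE xs_indep hs_indep]]]] := tens_min_rep s.
have [g [g_lin g_dual]] := lin_indep_dual hs_indep.
rewrite {s}sE in sx s_coassoc.
have f_lin := comb_lin xs.
have L_lin := comb_lift_lin C hs g.
have L_pi := comb_lift_pi g_lin g_dual s_coassoc.
have L_coassoc := comb_lift_coassoc g_lin s_coassoc.
pose E := sub_datum D f_lin L_lin.
have kernel_E : kernel_coassoc C D -> kernel_coassoc C E.
  exact: sub_datum_kernel_coassoc L_pi.
exists ('rV[k]_n : vectType k), E, (comb xs).
exists (@subspace_val _ _ _ (pi_image_subspace D f_lin)).
split; [split|split].
- exact: sub_datum_quasi f_lin (comb_inj xs_indep) L_lin L_pi L_coassoc quasiD.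
- exact: sub_datum_pmorph L_pi.
- exact: comb_inj.
- exact: subspace_val_inj.
- by exists (\row_i cEps C (hs i)); apply: comb_counit (quasi_counital quasiD) sx.
- by move=> /(lax_kernel_coassoc quasiD)/kernel_E/kernel_coassoc_geometric/geometric_lax.
by move=> /geometric_lax/(lax_kernel_coassoc quasiD)/kernel_E/kernel_coassoc_geometric.
Qed.
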